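(* Let $\mathcal{M}=(E,r)$ be a matroid with rank function $r$ and girth at least $d+1$. Let $i$ be an integer with $d\leq i\leq |E|$, and let $A$ be a uniformly random subset of $E$ of size $i$. Then $$\mathbb{E}(r(A))\geq d+(r(E)-d)\frac{i-d}{|E|-d}.$$
   Context: The girth of a matroid is the size of its smallest circuit ($+\infty$ if it has no circuits). *)

From mathcomp Require Import all_boot all_order all_algebra.
Set Implicit Arguments. Unset Strict Implicit. Unset Printing Implicit Defensive.
Import Order.TTheory GRing.Theory Num.Theory.

(* A matroid on the finite ground set E = [set: T], given by its rank function
   (axioms R1-R3). *)
Definition is_matroid_rank (T : finType) (r : {set T} -> nat) : Prop :=
  [/\ forall X : {set T}, r X <= #|X|,
      forall X Y : {set T}, X \subset Y -> r X <= r Y &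
      forall X Y : {set T}, r (X :|: Y) + r (X :&: Y) <= r X + r Y].

Definition dependent (T : finType) (r : {set T} -> nat) (X : {set T}) : bool :=
  r X < #|X|.

Definition circuit (T : finType) (r : {set T} -> nat) (C : {set T}) : Prop :=
  dependent r C /\ forall D : {set T}, D \proper C -> ~~ dependent r D.

(* girth >= k : every circuit has at least k elements (girth = +oo if no circuit) *)
Definition girth_ge (T : finType) (r : {set T} -> nat) (k : nat) : Prop :=
  forall C : {set T}, circuit r C -> k <= #|C|.

Definition expected_rank (T : finType) (r : {set T} -> nat) (i : nat) : rat :=
  (\sum_(A : {set T} | #|A| == i) (r A)%:R) / ('C(#|T|, i))%:R.

From mathcomp Require Import all_boot all_order all_algebra.
From mathcomp Require Import zify ring lra.
Import Order.TTheory GRing.Theory Num.Theory.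

(* Every set of at most d elements is independent, since circuits have more than
   d elements; hence every set of at least d elements has rank at least d.  For a
   set C with m := |C| > d, deleting the set K of coloops of C lowers the rank by
   |K|, which forces (m - d) |K| <= m (r C - d).  As the sum of r (C - e) over
   e in C is m r C - |K|, the average of r (C - e) - d is at least
   (m - 1 - d) / (m - d) times r C - d.  Averaging over all m-sets by double
   counting, the expected rank f i of a random i-set satisfies that
   (f i - d) / (i - d) is nonincreasing for i > d; comparing i with |E|, where
   f |E| = r E, gives the bound. *)

Lemma sum_setD1_card_eqS {T : finType} {V : nmodType} (F : {set T} -> V) i :
  (\sum_(C : {set T} | #|C| == i.+1) \sum_(e in C) F (C :\ e)
    = (\sum_(A : {set T} | #|A| == i) F A) *+ (#|T| - i)%N)%R.
Proof.
rewrite (exchange_big_dep predT) //=.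
transitivity (\sum_(e : T) \sum_(A : {set T} | (#|A| == i) && (e \notin A)) F A)%R.
  apply: eq_bigr => e _.
  rewrite (reindex_onto (fun A => e |: A) (fun C => C :\ e)); last first.
    by move=> C /andP[_ eC]; rewrite setD1K.
  apply: eq_big => [A|A /andP[/andP[_ _] /eqP <-]]; last first.
    by rewrite setU1K // !inE eqxx.
  rewrite setU11 andbT cardsU1; case eA: (e \in A) => /=.
    have /negbTE -> : (e |: A) :\ e != A.
      by apply/eqP => eeA; move: eA; rewrite -eeA !inE eqxx.
    by rewrite !andbF.
  by rewrite setU1K ?eA // eqxx andbT add1n eqSS.
rewrite (exchange_big_dep (fun A : {set T} => #|A| == i)) /=; last by move=> ? ? _ /andP[].
rewrite -sumrMnl; apply: eq_bigr => A /eqP cA.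
rewrite (eq_bigl (mem (~: A))); last by move=> e; rewrite !inE cA eqxx.
by rewrite sumr_const -(cardsC A) cA addKn.
Qed.

Lemma sumr_const_card_eq {T : finType} {V : nmodType} (x : V) j :
  (\sum_(A : {set T} | #|A| == j) x = x *+ 'C(#|T|, j))%R.
Proof. by rewrite -card_draws -sumr_const; apply: eq_bigl => A; rewrite inE. Qed.

Section MatroidRank.

Variables (T : finType) (r : {set T} -> nat).
Implicit Types X Y C K : {set T}.

Lemma dependent_has_circuit {X} :
  dependent r X -> exists2 C : {set T}, C \subset X & circuit r C.
Proof.
move=> depX; have [C /minsetP[depC minC] sCX] := minset_exists depX.
exists C => //; split=> [//|D ltDC]; apply/negP => depD.
by move: (ltDC); rewrite (minC D depD (proper_sub ltDC)) properxx.
Qed.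

Lemma expected_rank_setT : (expected_rank r #|T| = (r [set: T])%:R)%R.
Proof.
rewrite /expected_rank binn divr1 (big_pred1 [set: T]) // => A /=.
by rewrite eqEcard subsetT cardsT eqn_leq max_card.
Qed.

Lemma sum_rank_card_eq j : j <= #|T| ->
  (\sum_(A : {set T} | #|A| == j) (r A)%:R = expected_rank r j * 'C(#|T|, j)%:R :> rat)%R.
Proof. by move=> le_jT; rewrite divfK // pnatr_eq0 -lt0n bin_gt0. Qed.

Hypothesis r_matroid : is_matroid_rank r.

Lemma rank_le_card X : r X <= #|X|.
Proof. by case: r_matroid. Qed.

Lemma rankS {X Y} : X \subset Y -> r X <= r Y.
Proof. by case: r_matroid => _ + _; apply. Qed.

Lemma rank_submod X Y : r (X :|: Y) + r (X :&: Y) <= r X + r Y.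
Proof. by case: r_matroid. Qed.

Lemma rank_setD1 X e : r X <= (r (X :\ e)).+1.
Proof.
have sX : X \subset X :\ e :|: [set e].
  by apply/subsetP => x xX; rewrite !inE xX andbT orNb.
have := rank_submod (X :\ e) [set e]; have := rank_le_card [set e].
have := rankS sX; rewrite cards1; lia.
Qed.

Definition coloops C := [set e in C | r (C :\ e) < r C].

Lemma coloopS {C Y e} : e \in coloops C -> Y \subset C -> e \in Y -> r (Y :\ e) < r Y.
Proof.
rewrite inE => /andP[_ ltCe] sYC eY; have := rank_submod Y (C :\ e).
have -> : Y :|: C :\ e = C.
  apply/eqP; rewrite eqEsubset subUset sYC subD1set /=.
  apply/subsetP => x xC; rewrite !inE xC andbT.
  by case: eqVneq => [->|_]; rewrite ?eY ?orbT.
rewrite setIDA (setIidPl sYC); lia.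
Qed.

Lemma rank_setD_coloops {C K} : K \subset coloops C -> r (C :\: K) + #|K| <= r C.
Proof.
elim: {K}_.+1 {-2}K (ltnSn #|K|) => // n IHn K ltKn sK.
have [->|[e eK]] := set_0Vmem K; first by rewrite setD0 cards0 addn0.
have eC : e \in coloops C := subsetP sK e eK.
have eCK : e \in C :\: (K :\ e) by move: eC; rewrite !inE eqxx => /andP[].
have := coloopS eC (subsetDl C (K :\ e)) eCK.
rewrite setDDl setUC setD1K //.
have := IHn (K :\ e) _ (subset_trans (subD1set K e) sK).
rewrite (cardsD1 e K) eK in ltKn *; lia.
Qed.

Lemma sum_rank_setD1 C : \sum_(e in C) r (C :\ e) + #|coloops C| = #|C| * r C.
Proof.
have -> : #|coloops C| = \sum_(e in C | r (C :\ e) < r C) 1.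
  by rewrite -sum1_card; apply: eq_bigl => e; rewrite !inE.
rewrite big_mkcondr -big_split -sum_nat_const /=; apply: eq_bigr => e _.
have := rank_setD1 C e; have := rankS (subD1set C e).
by case: ltnP => /=; lia.
Qed.

Variable d : nat.
Hypothesis r_girth : girth_ge r d.+1.

Lemma rank_small {X} : #|X| <= d -> r X = #|X|.
Proof.
move=> leXd; apply/eqP; rewrite eqn_leq rank_le_card leqNgt; apply/negP => depX.
have [C sCX /r_girth] := dependent_has_circuit depX.
have := subset_leq_card sCX; lia.
Qed.

Lemma rank_ge_girth {X} : d <= #|X| -> d <= r X.
Proof.
case/card_geqP => s [uniq_s size_s sX].
have sYX : [set x in s] \subset X by apply/subsetP => x; rewrite inE; apply: sX.
have cardY : #|[set x in s]| = d by rewrite cardsE (card_uniqP uniq_s).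
by apply: leq_trans (rankS sYX); rewrite rank_small cardY.
Qed.

Lemma card_coloops_bound C : (#|C| - d) * #|coloops C| <= #|C| * (r C - d).
Proof.
have sKC : coloops C \subset C by apply/subsetP => e; rewrite inE => /andP[].
have := rank_setD_coloops (subxx (coloops C)).
have [dD|Dd] := leqP d #|C :\: coloops C|.
  by move: (rank_ge_girth dD) => ? ?; apply: leq_mul; [exact: leq_subr | lia].
have cD := cardsDS sKC; have := subset_leq_card sKC; have := rank_le_card C.
rewrite (rank_small (ltnW Dd)) => ? ? ?.
have -> : r C = #|C| by lia.
by rewrite mulnC leq_mul.
Qed.

Lemma sum_rank_setD1_ge {C} : d < #|C| ->
  #|C| * (d + (#|C| - d.+1) * r C) <= (#|C| - d) * \sum_(e in C) r (C :\ e).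
Proof.
move=> ltdC; have := sum_rank_setD1 C; have := card_coloops_bound C.
have := rank_ge_girth (ltnW ltdC); move: ltdC.
move: (\sum_(e in C) _) #|coloops C| (r C) #|C| => s c R m ltdm leR.
have [a ->] : exists a, m = d + a + 1 by exists (m - d.+1); lia.
have [b ->] : exists b, R = d + b by exists (R - d); lia.
have -> : d + a + 1 - d = a + 1 by lia.
have -> : d + a + 1 - d.+1 = a by lia.
rewrite addKn => hc /(congr1 (muln (a + 1))) hs.
lia.
Qed.

Local Open Scope ring_scope.

Lemma expected_rank_step i : (d <= i < #|T|)%N ->
  (i%:R - d%:R) * (expected_rank r i.+1 - d%:R)
    <= (i.+1%:R - d%:R) * (expected_rank r i - d%:R) :> rat.
Proof.
case/andP => le_di lt_iT.
have le_sums :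
    \sum_(C : {set T} | #|C| == i.+1) i.+1%:R * (d%:R + (i%:R - d%:R) * (r C)%:R)
    <= \sum_(C : {set T} | #|C| == i.+1)
         (i.+1%:R - d%:R) * \sum_(e in C) (r (C :\ e))%:R :> rat.
  apply: ler_sum => C /eqP cC.
  have ltdC : (d < #|C|)%N by rewrite cC ltnS.
  have := sum_rank_setD1_ge ltdC.
  by rewrite cC subSS -(ler_nat rat) !natrM natrD natrM !natrB ?(leqW le_di) // natr_sum.
rewrite -!big_distrr /= (sum_setD1_card_eqS (fun X => (r X)%:R : rat)) in le_sums.
rewrite big_split /= sumr_const_card_eq -big_distrr /= !sum_rank_card_eq ?(ltnW lt_iT) //
  -[d%:R *+ _]mulr_natr -[_ *+ (#|T| - i)%N]mulr_natr in le_sums.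
set f1 := expected_rank r i.+1 in le_sums *; set f0 := expected_rank r i in le_sums *.
set N := 'C(#|T|, i.+1)%:R in le_sums; set M := 'C(#|T|, i)%:R in le_sums.
set k := (#|T| - i)%N%:R in le_sums.
have NM : i.+1%:R * N = k * M by rewrite -!natrM mul_bin_left.
have kM_gt0 : 0 < k * M by rewrite -natrM ltr0n muln_gt0 subn_gt0 lt_iT bin_gt0 ltnW.
have eL : i.+1%:R * (d%:R * N + (i%:R - d%:R) * (f1 * N))
    = k * M * (d%:R + (i%:R - d%:R) * f1) by rewrite -NM; ring.
have eR : (i.+1%:R - d%:R) * (f0 * M * k) = k * M * ((i.+1%:R - d%:R) * f0) by ring.
rewrite eL eR ler_pM2l // -natr1 in le_sums *.
lra.
Qed.

Lemma expected_rank_chord i : (d <= i <= #|T|)%N ->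
  (i%:R - d%:R) * (expected_rank r #|T| - d%:R)
    <= (#|T|%:R - d%:R) * (expected_rank r i - d%:R) :> rat.
Proof.
case/andP => le_di le_iT; rewrite -(subKn le_iT).
have : (#|T| - i <= #|T| - d)%N by rewrite leq_sub2l.
elim: (#|T| - i)%N => [|k IHk] le_k; first by rewrite subn0.
set j := (#|T| - k.+1)%N.
have le_dj : (d <= j)%N by lia.
have lt_jT : (j < #|T|)%N by lia.
have Ej : (#|T| - k)%N = j.+1 by lia.
have := @expected_rank_step j; rewrite le_dj lt_jT -Ej => /(_ isT).
have := IHk (ltnW le_k); rewrite Ej -natr1.
have : 0 <= j%:R - d%:R :> rat by rewrite subr_ge0 ler_nat.
have : j%:R - d%:R <= #|T|%:R - d%:R :> rat by rewrite lerD2r ler_nat ltnW.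
set F := expected_rank r #|T| - d%:R; set Fj := expected_rank r j - d%:R.
set Fj1 := expected_rank r j.+1 - d%:R.
nra.
Qed.

End MatroidRank.

Local Open Scope ring_scope.

Theorem lemma3p7 (T : finType) (r : {set T} -> nat) (d i : nat) :
  is_matroid_rank r -> girth_ge r d.+1 -> (d <= i)%N -> (i <= #|T|)%N ->
  (d%:R + ((r [set: T])%:R - d%:R) * ((i%:R - d%:R) / (#|T|%:R - d%:R)) : rat)
    <= expected_rank r i.
Proof.
move=> r_matroid r_girth le_di le_iT.
have [lt_dT|le_Td] := ltnP d #|T|.
  have := @expected_rank_chord T r r_matroid d r_girth i (introT andP (conj le_di le_iT)).
  rewrite expected_rank_setT mulrA -lerBrDl ler_pdivrMr ?subr_gt0 ?ltr_nat //.
  lra.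
have Ei : i = d by lia.
have Ed : d = #|T| by lia.
rewrite Ei subrr mul0r mulr0 addr0 {2}Ed expected_rank_setT ler_nat.
by apply: (@rank_ge_girth T r r_matroid d r_girth); rewrite cardsT -Ed.
Qed.
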